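(* Consider the setting and the primal–dual iteration described in the context, with all dual variables initialized at zero: $\bm{U}_{i,j,k}^{(0)}=\bm{V}_{i,j,k}^{(0)}=\bm{0}$ for all $i\in\mathcal{V}$, $j\in\mathcal{N}_i$, $1\le k\le K$. Then for every $t\ge 0$ and all $i\in\mathcal{V}$, $j\in\mathcal{N}_i$, $k$, one has $\bm{U}_{i,j,k}^{(t)}=\bm{V}_{j,i,k}^{(t)}$, so that $\bm{Y}_{i,j,k}^{(t)}:=\bm{U}_{i,j,k}^{(t)}+\bm{V}_{j,i,k}^{(t)}=2\bm{U}_{i,j,k}^{(t)}$ satisfies $\bm{Y}_{i,j,k}^{(0)}=\bm{0}$ and, for $t\ge 1$, $$\bm{Y}_{i,j,k}^{(t)}=\bm{Y}_{i,j,k}^{(t-1)}+\rho\Big[\frac{\bm{Z}_{i,k}^{(t-1)}{\bm{Z}_{i,k}^{(t-1)}}^T}{m_{i,k}}-\frac{\bm{Z}_{j,k}^{(t-1)}{\bm{Z}_{j,k}^{(t-1)}}^T}{m_{j,k}}\Big];$$ moreover the primal step decouples across nodes: a feasible $\bm{Z}=(\bm{Z}_1,\dots,\bm{Z}_N)$ minimizes $\mathcal{L}(\bm{U}^{(t)},\bm{V}^{(t)},\bm{Z},\bm{T}^{(t-1)})$ over the feasible set if and only if, for every $i$, $\bm{Z}_i$ minimizes over $\{\bm{Z}_i:\|\bm{Z}_{i,k}\|_F^2=m_{i,k}\ \forall k\}$ the function $$\mathcal{L}'(\bm{Y}_i^{(t)},\bm{Z}_i)=R_i^c(\bm{Z}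_i)-R_i(\bm{Z}_i)+\sum_{j\in\mathcal{N}_i}\sum_{k=1}^K\Big\{\mathrm{tr}\Big[{\bm{Y}_{i,j,k}^{(t)}}^T\Big(\frac{\bm{Z}_{i,k}\bm{Z}_{i,k}^T}{m_{i,k}}-\frac{\bm{Z}_{j,k}^{(t-1)}{\bm{Z}_{j,k}^{(t-1)}}^T}{m_{j,k}}\Big)\Big]+\gamma\Big\|\frac{\bm{Z}_{i,k}\bm{Z}_{i,k}^T}{m_{i,k}}-\frac{1}{2}\Big(\frac{\bm{Z}_{i,k}^{(t-1)}{\bm{Z}_{i,k}^{(t-1)}}^T}{m_{i,k}}+\frac{\bm{Z}_{j,k}^{(t-1)}{\bm{Z}_{j,k}^{(t-1)}}^T}{m_{j,k}}\Big)\Big\|_F^2\Big\}.$$ Hence the iteration reduces to the two steps above ($\bm{Y}$-update, then per-node minimization of $\mathcal{L}'$), which can be carried out in parallel across nodes.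
   Context: Let $\mathcal{G}=(\mathcal{V},\mathcal{E})$ be a connected undirected graph with $\mathcal{V}=\{1,\dots,N\}$ and neighbor sets $\mathcal{N}_i$. Node $i$ holds a matrix $\bm{Z}_i\in\mathbb{R}^{d\times m_i}$ whose columns carry labels in $\{1,\dots,K\}$; $\bm{Z}_{i,k}\in\mathbb{R}^{d\times m_{i,k}}$ is the submatrix of columns with label $k$, and $m_{i,k}\ge 1$. Let $m=\sum_i m_i$, $\epsilon>0$, and $R_i(\bm{Z}_i)=\frac{m_i}{2m}\log\det(\bm{I}+\frac{d}{m_i\epsilon^2}\bm{Z}_i\bm{Z}_i^T)$, $R_i^c(\bm{Z}_i)=\sum_{k=1}^K\frac{m_{i,k}}{2m}\log\det(\bm{I}+\frac{d}{m_{i,k}\epsilon^2}\bm{Z}_{i,k}\bm{Z}_{i,k}^T)$. Feasible $\bm{Z}$ means $\|\bm{Z}_{i,k}\|_F^2=m_{i,k}$ for all $i,k$. For each $i\in\mathcal{V}$, $j\in\mathcal{N}_i$, $k$, there are auxiliary $d\times d$ variables $\bm{T}_{i,j,k}$ and dual variables $\bm{U}_{i,j,k},\bm{V}_{i,j,k}$, associated with the constraints $\bm{Z}_{i,k}\bm{Z}_{i,k}^T/m_{i,k}=\bm{T}_{i,j,k}$ and $\bm{Z}_{j,k}\bm{Z}_{j,k}^T/m_{j,k}=\bm{T}_{i,j,k}$. The augmented Lagrangian (penalty $\gamma>0$) is $\mathcal{L}(\bm{Z},\bm{T},\bm{U},\bm{V})=\sum_{i=1}^N\Big\{R_i^c(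\bm{Z}_i)-R_i(\bm{Z}_i)+\sum_{j\in\mathcal{N}_i}\sum_{k=1}^K\big(\mathrm{tr}[\bm{U}_{i,j,k}^T(\frac{\bm{Z}_{i,k}\bm{Z}_{i,k}^T}{m_{i,k}}-\bm{T}_{i,j,k})]+\mathrm{tr}[\bm{V}_{i,j,k}^T(\frac{\bm{Z}_{j,k}\bm{Z}_{j,k}^T}{m_{j,k}}-\bm{T}_{i,j,k})]\big)+\frac{\gamma}{2}\sum_{j\in\mathcal{N}_i}\sum_{k=1}^K\big[\|\frac{\bm{Z}_{i,k}\bm{Z}_{i,k}^T}{m_{i,k}}-\bm{T}_{i,j,k}\|_F^2+\|\frac{\bm{Z}_{j,k}\bm{Z}_{j,k}^T}{m_{j,k}}-\bm{T}_{i,j,k}\|_F^2\big]\Big\}$. Iteration (dual step size $\rho>0$): start from a feasible $\bm{Z}^{(0)}$ and zero duals, with $\bm{T}^{(0)}$ given by the $\bm{T}$-step below at $t=0$. For $t\ge1$: $\bm{U}_{i,j,k}^{(t)}=\bm{U}_{i,j,k}^{(t-1)}+\rho[\bm{Z}_{i,k}^{(t-1)}{\bm{Z}_{i,k}^{(t-1)}}^T/m_{i,k}-\bm{T}_{i,j,k}^{(t-1)}]$; $\bm{V}_{i,j,k}^{(t)}=\bm{V}_{i,j,k}^{(t-1)}+\rho[\bm{Z}_{j,k}^{(t-1)}{\bm{Z}_{j,k}^{(t-1)}}^T/m_{j,k}-\bm{T}_{i,j,k}^{(t-1)}]$; $\bm{Z}^{(t)}\in\arg\min_{\bm{Z}\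 \text{feasible}}\mathcal{L}(\bm{U}^{(t)},\bm{V}^{(t)},\bm{Z},\bm{T}^{(t-1)})$; $\bm{T}_{i,j,k}^{(t)}=\arg\min_{\bm{T}}\{-\mathrm{tr}[(\bm{U}_{i,j,k}^{(t)}+\bm{V}_{i,j,k}^{(t)})^T\bm{T}]+\frac{\gamma}{2}[\|\bm{Z}_{i,k}^{(t)}{\bm{Z}_{i,k}^{(t)}}^T/m_{i,k}-\bm{T}\|_F^2+\|\bm{Z}_{j,k}^{(t)}{\bm{Z}_{j,k}^{(t)}}^T/m_{j,k}-\bm{T}\|_F^2]\}$. $\bm{Y}_i^{(t)}$ denotes the collection $\{\bm{Y}_{i,j,k}^{(t)}\}_{j\in\mathcal{N}_i,k}$. *)

From HB Require Import structures.
From mathcomp Require Import all_boot all_order all_algebra.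
From mathcomp Require Import reals exp.

Set Implicit Arguments.
Unset Strict Implicit.
Unset Printing Implicit Defensive.

Import Order.TTheory GRing.Theory Num.Theory.
Local Open Scope ring_scope.

Section DecentralizedMCR2.
Variable R : realType.
Variables (N K d : nat).
(* m i k = m_{i,k}: number of columns of node i carrying label k. *)
Variable m : 'I_N -> 'I_K -> nat.
(* adjacency relation of the graph: j \in N_i  <->  e i j *)
Variable e : rel 'I_N.
Variables (eps gamma : R).

(* Node i's data, given by its label blocks Z_{i,k} in R^{d x m_{i,k}}. *)
Definition nodecfg (i : 'I_N) := forall k : 'I_K, 'M[R]_(d, m i k).
Definition config := forall i : 'I_N, nodecfg i.

Definition frob2 (p q : nat) (A : 'M[R]_(p, q)) : R :=
  \sum_(a < p) \sum_(b < q) A a b ^+ 2.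

Definition mnode (i : 'I_N) : nat := (\sum_(k < K) m i k)%N.
Definition mtot : nat := (\sum_(i < N) mnode i)%N.

(* Z_i Z_i^T = sum of the label blocks' Gram matrices (independent of
   column ordering). *)
Definition gram_node (i : 'I_N) (Zi : nodecfg i) : 'M[R]_d :=
  \sum_(k < K) (Zi k *m (Zi k)^T).

Definition gramk (i : 'I_N) (Zi : nodecfg i) (k : 'I_K) : 'M[R]_d :=
  ((m i k)%:R)^-1 *: (Zi k *m (Zi k)^T).

Definition logdet_term (w : nat) (G : 'M[R]_d) : R :=
  w%:R / (2 * mtot%:R) *
    ln (\det (1%:M + (d%:R / (w%:R * eps ^+ 2)) *: G)).

Definition Rnode (i : 'I_N) (Zi : nodecfg i) : R :=
  logdet_term (mnode i) (gram_node Zi).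

Definition Rcnode (i : 'I_N) (Zi : nodecfg i) : R :=
  \sum_(k < K) logdet_term (m i k) (Zi k *m (Zi k)^T).

Definition node_feasible (i : 'I_N) (Zi : nodecfg i) : Prop :=
  forall k : 'I_K, frob2 (Zi k) = (m i k)%:R.

Definition feasible (Z : config) : Prop := forall i, node_feasible (Z i).

(* Auxiliary / dual variables, indexed by (i, j, k); only entries with
   e i j (i.e. j \in N_i) are meaningful. *)
Definition dualvar := 'I_N -> 'I_N -> 'I_K -> 'M[R]_d.

Definition lagrangian (Z : config) (T U V : dualvar) : R :=
  \sum_(i < N)
    (Rcnode (Z i) - Rnode (Z i)
     + \sum_(j < N | e i j) \sum_(k < K)
         (\tr ((U i j k)^T *m (gramk (Z i) k - T i j k))
          + \tr ((V i j k)^T *m (gramk (Z j) k - T i j k)))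
     + gamma / 2 * \sum_(j < N | e i j) \sum_(k < K)
         (frob2 (gramk (Z i) k - T i j k) + frob2 (gramk (Z j) k - T i j k))).

(* Objective of the T-step for one triple (i,j,k):
   -tr[(U+V)^T T] + gamma/2 (||G_i - T||^2 + ||G_j - T||^2). *)
Definition Tobj (S Gi Gj T : 'M[R]_d) : R :=
  - \tr (S^T *m T) + gamma / 2 * (frob2 (Gi - T) + frob2 (Gj - T)).

Definition Ydual (U V : dualvar) : dualvar := fun i j k => U i j k + V j i k.

(* L'(Y_i, Z_i), with Zold = Z^{(t-1)} and Yi j k = Y_{i,j,k}. *)
Definition Lprime (i : 'I_N) (Yi : 'I_N -> 'I_K -> 'M[R]_d) (Zold : config)
    (Zi : nodecfg i) : R :=
  Rcnode Zi - Rnode Zi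
  + \sum_(j < N | e i j) \sum_(k < K)
      (\tr ((Yi j k)^T *m (gramk Zi k - gramk (Zold j) k))
       + gamma * frob2 (gramk Zi k
                        - 2^-1 *: (gramk (Zold i) k + gramk (Zold j) k))).

End DecentralizedMCR2.

From HB Require Import structures.
From mathcomp Require Import all_boot all_order all_algebra.
From mathcomp Require Import reals exp.
From mathcomp Require Import ring lra.
Import Order.TTheory GRing.Theory Num.Theory.
Local Open Scope ring_scope.

(* With zero initial duals, the closed form T = (G_i + G_j)/2 + (U + V)/(2 gamma)
   of the T-step and the dual updates preserve U_{ijk} = V_{jik} and
   U_{ijk} = -U_{jik} (induction on t).  Hence T^{(t)}_{ijk} is the midpoint of
   the two Gram matrices, and Y = U + V^swap = 2U follows the stated recursion.
   With V_{ij} = U_{ji} and T_{ij} = T_{ji}, the V-terms of the Lagrangian on the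
   edge (i,j) are the U-terms on (j,i), so the Lagrangian is sum_i L'_i(Z_i) plus
   a constant; a sum of functions of independent blocks is minimized exactly
   when every block is. *)

Lemma mxtrace_trmx_mul (R : pzRingType) p q (A B : 'M[R]_(p, q)) :
  \tr (A^T *m B) = \sum_(a < p) \sum_(b < q) A a b * B a b.
Proof.
rewrite /mxtrace; under eq_bigr do rewrite mxE.
rewrite exchange_big; apply: eq_bigr => a _; apply: eq_bigr => b _.
by rewrite !mxE.
Qed.

Section Frobenius.
Context {R : realType}.

Lemma frob2_ge0 p q (A : 'M[R]_(p, q)) : 0 <= frob2 A.
Proof. by apply: sumr_ge0 => a _; apply: sumr_ge0 => b _; exact: sqr_ge0. Qed.

Lemma frob2_eq0 p q (A : 'M[R]_(p, q)) : frob2 A = 0 -> A = 0.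
Proof.
move=> /eqP; rewrite psumr_eq0 => [/allP A0|a _]; last first.
  by apply: sumr_ge0 => b _; exact: sqr_ge0.
apply/matrixP => a b; have /implyP/(_ isT) := A0 a (mem_index_enum a).
rewrite psumr_eq0 => [/allP/(_ b (mem_index_enum b))|c _]; last exact: sqr_ge0.
by rewrite sqrf_eq0 mxE => /eqP.
Qed.

Context {d : nat} {gamma : R}.

Lemma Tobj_sub_argmin (S Gi Gj X : 'M[R]_d) :
  gamma != 0 ->
  Tobj gamma S Gi Gj X
    - Tobj gamma S Gi Gj (2^-1 *: (Gi + Gj) + (2 * gamma)^-1 *: S)
  = gamma * frob2 (X - (2^-1 *: (Gi + Gj) + (2 * gamma)^-1 *: S)).
Proof.
move=> gamma_neq0; rewrite /Tobj /frob2 !mxtrace_trmx_mul.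
rewrite -!big_split /= !mulr_sumr -!sumrN -!big_split /= -sumrB.
apply: eq_bigr => a _.
rewrite -!big_split /= !mulr_sumr -!sumrN -!big_split /= -sumrB.
apply: eq_bigr => b _.
by rewrite !mxE; field.
Qed.

Lemma Tobj_argmin {S Gi Gj X : 'M[R]_d} :
  0 < gamma -> (forall X', Tobj gamma S Gi Gj X <= Tobj gamma S Gi Gj X') ->
  X = 2^-1 *: (Gi + Gj) + (2 * gamma)^-1 *: S.
Proof.
move=> gamma_gt0 /(_ (2^-1 *: (Gi + Gj) + (2 * gamma)^-1 *: S)).
rewrite -subr_le0 Tobj_sub_argmin ?gt_eqF // pmulr_rle0 // => frob_le0.
apply/eqP; rewrite -subr_eq0; apply/eqP/frob2_eq0.
by apply/eqP; rewrite eq_le frob_le0 frob2_ge0.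
Qed.

End Frobenius.

Lemma sum_adj_swap (R : nmodType) n (e : rel 'I_n) (F : 'I_n -> 'I_n -> R) :
  symmetric e ->
  \sum_(i < n) \sum_(j < n | e i j) F i j = \sum_(i < n) \sum_(j < n | e i j) F j i.
Proof.
move=> e_sym; rewrite (exchange_big_dep xpredT) //=.
by apply: eq_bigr => i _; apply: eq_bigl => j; rewrite e_sym.
Qed.

Lemma sum_separable_minP {R : numDomainType} {I : finType} {T_ : I -> Type}
    {P : forall i, T_ i -> Prop} {f : forall i, T_ i -> R} {x : forall i, T_ i} :
  (forall i, P i (x i)) ->
  (forall y : forall i, T_ i,
     (forall i, P i (y i)) -> \sum_i f i (x i) <= \sum_i f i (y i))
  <-> (forall i (yi : T_ i), P i yi -> f i (x i) <= f i yi).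
Proof.
move=> Px; split=> [xmin i yi Pyi | xmin_i y Py]; last first.
  by apply: ler_sum => i _; exact: xmin_i.
have Px' j : P j (dfwith x yi j) by case: dfwithP => [|k _]; [exact: Pyi | exact: Px].
have := xmin _ Px'; rewrite (bigD1 i) //= [X in _ <= X](bigD1 i) //= dfwith_in.
rewrite [X in _ <= _ + X](eq_bigr (fun j => f j (x j))) ?lerD2r // => j ji.
by rewrite dfwith_out // eq_sym.
Qed.

Section LagrangianSplit.
Context {R : realType} {N K d : nat} {m : 'I_N -> 'I_K -> nat} {e : rel 'I_N}.
Variables (eps gamma : R).
Hypothesis e_sym : symmetric e.
Context {Zold : config R d m} {T U V : dualvar R N K d}.
Hypothesis V_swap : forall i j k, e i j -> V i j k = U j i k.
Hypothesis T_mid :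
  forall i j k, e i j -> T i j k = 2^-1 *: (gramk (Zold i) k + gramk (Zold j) k).

Let T_sym i j k : e i j -> T j i k = T i j k.
Proof.
move=> eij; have eji : e j i by rewrite e_sym.
by rewrite !T_mid // addrC.
Qed.

Let local_cost (Z0 : config R d m) i := Rcnode eps (Z0 i) - Rnode eps (Z0 i).

Let edge_cost (Z0 : config R d m) i j k :=
  \tr ((U i j k)^T *m (gramk (Z0 i) k - T i j k))
  + gamma / 2 * frob2 (gramk (Z0 i) k - T i j k).

Lemma lagrangian_edge_sum Z0 :
  lagrangian e eps gamma Z0 T U V =
  \sum_i local_cost Z0 i
  + \sum_i \sum_(j < N | e i j) \sum_(k < K) 2 * edge_cost Z0 i j k.
Proof.
have -> : lagrangian e eps gamma Z0 T U V =
    \sum_i local_cost Z0 i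
    + \sum_i \sum_(j < N | e i j) \sum_(k < K) (edge_cost Z0 i j k + edge_cost Z0 j i k).
  rewrite /lagrangian -big_split /=; apply: eq_bigr => i _.
  rewrite -addrA mulr_sumr -big_split /=; congr (_ + _); apply: eq_bigr => j eij.
  have eji : e j i by rewrite e_sym.
  rewrite mulr_sumr -big_split /=; apply: eq_bigr => k _.
  by rewrite /edge_cost V_swap // T_sym // mulrDr; lra.
congr (_ + _).
under eq_bigr do under eq_bigr do rewrite big_split.
under eq_bigr do rewrite big_split.
rewrite big_split /=.
rewrite [X in _ + X](@sum_adj_swap _ _ _ (fun i j => \sum_k edge_cost Z0 j i k)) //.
rewrite -big_split /=; apply: eq_bigr => i _; rewrite -big_split /=.
apply: eq_bigr => j _; rewrite -big_split /=; apply: eq_bigr => k _.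
by rewrite mulrDl mul1r.
Qed.

Lemma Lprime_edge_sum Z0 i :
  Lprime e eps gamma (Ydual U V i) Zold (Z0 i) =
  local_cost Z0 i
  + \sum_(j < N | e i j) \sum_(k < K)
      (2 * edge_cost Z0 i j k
       + 2 * \tr ((U i j k)^T *m (T i j k - gramk (Zold j) k))).
Proof.
rewrite /Lprime; congr (_ + _); apply: eq_bigr => j eij.
have eji : e j i by rewrite e_sym.
apply: eq_bigr => k _; rewrite /Ydual /edge_cost V_swap // -T_mid //.
by rewrite [(U i j k + _)^T]linearD /= mulmxDl mxtraceD !mulmxBr !linearB /=; lra.
Qed.

Lemma lagrangian_separable :
  exists C : R, forall Z0,
    lagrangian e eps gamma Z0 T U V =
    \sum_i Lprime e eps gamma (Ydual U V i) Zold (Z0 i) + C.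
Proof.
exists (- \sum_i \sum_(j < N | e i j) \sum_(k < K)
          2 * \tr ((U i j k)^T *m (T i j k - gramk (Zold j) k))).
move=> Z0; rewrite lagrangian_edge_sum (eq_bigr _ (fun i _ => Lprime_edge_sum Z0 i)).
rewrite [in RHS]big_split -addrA; congr (_ + _).
apply/eqP; rewrite eq_sym subr_eq -big_split; apply/eqP/eq_bigr => i _.
rewrite -big_split; apply: eq_bigr => j _.
by rewrite -big_split.
Qed.

End LagrangianSplit.

Section DualIteration.
Context {R : realType} {N K d : nat} {m : 'I_N -> 'I_K -> nat}.
Context {e : rel 'I_N} {gamma rho : R}.
Context {Z : nat -> config R d m} {T U V : nat -> dualvar R N K d}.
Hypotheses (e_sym : symmetric e) (gamma_gt0 : 0 < gamma).
Hypothesis dual_init : forall i j k, e i j -> U 0%N i j k = 0 /\ V 0%N i j k = 0.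
Hypothesis T_step : forall t i j k, e i j -> forall T' : 'M[R]_d,
  Tobj gamma (U t i j k + V t i j k) (gramk (Z t i) k) (gramk (Z t j) k) (T t i j k)
  <= Tobj gamma (U t i j k + V t i j k) (gramk (Z t i) k) (gramk (Z t j) k) T'.
Hypothesis U_step : forall t i j k, e i j ->
  U t.+1 i j k = U t i j k + rho *: (gramk (Z t i) k - T t i j k).
Hypothesis V_step : forall t i j k, e i j ->
  V t.+1 i j k = V t i j k + rho *: (gramk (Z t j) k - T t i j k).

Let dual_antisym t := forall i j k, e i j ->
  U t i j k = V t j i k /\ U t i j k + U t j i k = 0.

Let T_step_mid t : dual_antisym t -> forall i j k, e i j ->
  T t i j k = 2^-1 *: (gramk (Z t i) k + gramk (Z t j) k).
Proof.
move=> anti i j k eij; have eji : e j i by rewrite e_sym.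
rewrite (Tobj_argmin gamma_gt0 (T_step t i j k eij)) -(anti j i k eji).1.
by rewrite (anti i j k eij).2 scaler0 addr0.
Qed.

Let dual_antisym_step t : dual_antisym t -> dual_antisym t.+1.
Proof.
move=> anti i j k eij; have eji : e j i by rewrite e_sym.
have [Uij_Vji Uij_Uji] := anti i j k eij.
have mid_cancel (A B : 'M[R]_d) : A - 2^-1 *: (A + B) + (B - 2^-1 *: (A + B)) = 0.
  by apply/matrixP => a b; rewrite !mxE; field.
rewrite !U_step // V_step // [T t j i k]T_step_mid // [T t i j k]T_step_mid //.
rewrite [gramk (Z t j) k + _]addrC; split; first by rewrite Uij_Vji.
by rewrite addrACA Uij_Uji add0r -scalerDr mid_cancel scaler0.
Qed.

Let dual_antisym_all t : dual_antisym t.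
Proof.
elim: t => [|t IH]; last exact: dual_antisym_step.
move=> i j k eij; have eji : e j i by rewrite e_sym.
by rewrite (dual_init i j k eij).1 (dual_init j i k eji).1 (dual_init j i k eji).2 addr0.
Qed.

Lemma dual_symmetry t i j k : e i j -> U t i j k = V t j i k.
Proof. by move=> eij; case: (dual_antisym_all t i j k eij). Qed.

Lemma T_step_midpoint t i j k : e i j ->
  T t i j k = 2^-1 *: (gramk (Z t i) k + gramk (Z t j) k).
Proof. exact/T_step_mid/dual_antisym_all. Qed.

Lemma Ydual_double t i j k : e i j -> Ydual (U t) (V t) i j k = 2%:R *: U t i j k.
Proof. by move=> eij; rewrite /Ydual -dual_symmetry // scaler_nat mulr2n. Qed.

Lemma Ydual_step t i j k : e i j ->
  Ydual (U t.+1) (V t.+1) i j k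
  = Ydual (U t) (V t) i j k + rho *: (gramk (Z t i) k - gramk (Z t j) k).
Proof.
move=> eij; have eji : e j i by rewrite e_sym.
have mid_dev2 (A B : 'M[R]_d) : A - 2^-1 *: (A + B) + (A - 2^-1 *: (B + A)) = A - B.
  by apply/matrixP => a b; rewrite !mxE; field.
by rewrite /Ydual U_step // V_step // !T_step_midpoint // addrACA -scalerDr mid_dev2.
Qed.

End DualIteration.

Theorem proposition1 (R : realType) (N K d : nat) (m : 'I_N -> 'I_K -> nat)
    (e : rel 'I_N) (eps gamma rho : R)
    (Z : nat -> config R d m) (T U V : nat -> dualvar R N K d) :
  (* undirected (simple) connected graph *)
  symmetric e -> irreflexive e -> (forall i j, connect e i j) ->
  (forall i k, (0 < m i k)%N) -> 0 < eps -> 0 < gamma -> 0 < rho ->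
  (* initialization *)
  feasible (Z 0%N) ->
  (forall i j k, e i j -> U 0%N i j k = 0 /\ V 0%N i j k = 0) ->
  (* T-step, for every t >= 0 (T^{(0)} included) *)
  (forall t i j k, e i j -> forall T' : 'M[R]_d,
     Tobj gamma (U t i j k + V t i j k) (gramk (Z t i) k) (gramk (Z t j) k)
          (T t i j k)
     <= Tobj gamma (U t i j k + V t i j k) (gramk (Z t i) k) (gramk (Z t j) k) T') ->
  (* dual steps: U^{(t+1)}, V^{(t+1)} *)
  (forall t i j k, e i j ->
     U t.+1 i j k = U t i j k + rho *: (gramk (Z t i) k - T t i j k)) ->
  (forall t i j k, e i j ->
     V t.+1 i j k = V t i j k + rho *: (gramk (Z t j) k - T t i j k)) ->
  (* primal step: Z^{(t+1)} minimizes L(U^{(t+1)}, V^{(t+1)}, ., T^{(t)}) *)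
  (forall t, feasible (Z t.+1) /\
     forall Z' : config R d m, feasible Z' ->
       lagrangian e eps gamma (Z t.+1) (T t) (U t.+1) (V t.+1)
       <= lagrangian e eps gamma Z' (T t) (U t.+1) (V t.+1)) ->
  forall t : nat,
    (forall i j k, e i j ->
       U t i j k = V t j i k /\ Ydual (U t) (V t) i j k = 2%:R *: U t i j k)
    /\ (forall i j k, e i j ->
       Ydual (U 0%N) (V 0%N) i j k = 0
       /\ Ydual (U t.+1) (V t.+1) i j k
          = Ydual (U t) (V t) i j k + rho *: (gramk (Z t i) k - gramk (Z t j) k))
    /\ (forall Z' : config R d m, feasible Z' ->
         ((forall Z'' : config R d m, feasible Z'' ->
             lagrangian e eps gamma Z' (T t) (U t.+1) (V t.+1)
             <= lagrangian e eps gamma Z'' (T t) (U t.+1) (V t.+1))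
          <->
          (forall i (Zi : nodecfg R d m i), node_feasible Zi ->
             Lprime e eps gamma (Ydual (U t.+1) (V t.+1) i) (Z t) (Z' i)
             <= Lprime e eps gamma (Ydual (U t.+1) (V t.+1) i) (Z t) Zi))).
Proof.
move=> e_sym _ _ _ _ gamma_gt0 _ _ dual_init T_step U_step V_step _ t.
have sym := dual_symmetry e_sym gamma_gt0 dual_init T_step U_step V_step.
have Tmid := T_step_midpoint e_sym gamma_gt0 dual_init T_step U_step V_step.
have Ydbl := Ydual_double e_sym gamma_gt0 dual_init T_step U_step V_step.
have Ystep := Ydual_step e_sym gamma_gt0 dual_init T_step U_step V_step.
split; [|split].
- by move=> i j k eij; split; [exact: sym | exact: Ydbl].
- move=> i j k eij; split; last exact: Ystep.
  have eji : e j i by rewrite e_sym.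
  by rewrite /Ydual (dual_init i j k eij).1 (dual_init j i k eji).2 addr0.
have V_swap i j k : e i j -> V t.+1 i j k = U t.+1 j i k.
  by move=> eij; rewrite sym // e_sym.
have [C lagrC] := lagrangian_separable eps gamma e_sym V_swap (Tmid t).
move=> Z' feasZ'; rewrite -(sum_separable_minP feasZ').
by split=> Zmin Z'' feasZ''; move: (Zmin Z'' feasZ''); rewrite !lagrC lerD2r.
Qed.
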